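(* For $i=1,2$, let $[x^{(i)}_k]_{k=0}^N$ be a zero-mean nonsingular Gaussian Markov sequence obeying the forward Markov model $$x^{(i)}_k=M^{(i)}_{k,k-1}x^{(i)}_{k-1}+e^{M,(i)}_k,\ k\in[1,N],\qquad x^{(i)}_0=e^{M,(i)}_0,$$ where $[e^{M,(i)}_k]$ is a zero-mean white nonsingular Gaussian sequence with $\mathrm{Cov}(e^{M,(i)}_k)=M^{(i)}_k$. Then the two sequences share the same reciprocal model if and only if $$(M^{(1)}_k)^{-1}+(M^{(1)}_{k+1,k})'(M^{(1)}_{k+1})^{-1}M^{(1)}_{k+1,k}=(M^{(2)}_k)^{-1}+(M^{(2)}_{k+1,k})'(M^{(2)}_{k+1})^{-1}M^{(2)}_{k+1,k},\quad k\in[1,N-1],$$ and $$(M^{(1)}_{k+1,k})'(M^{(1)}_{k+1})^{-1}=(M^{(2)}_{k+1,k})'(M^{(2)}_{k+1})^{-1},\quad k\in[0,N-1].$$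
   Context: $[0,N]=(0,1,\ldots,N)$; $x=[x_0',\ldots,x_N']'$, $C=\mathrm{Cov}(x)$, $'$ denotes transpose. Every zero-mean nonsingular Gaussian Markov sequence is reciprocal and obeys a reciprocal model $R^0_kx_k-R^-_kx_{k-1}-R^+_kx_{k+1}=e^R_k$, $k\in[1,N-1]$, whose coefficients are determined by the block entries of $C^{-1}$: writing $A_k$ for the $(k,k)$ block and $B_k$ for the $(k,k+1)$ block of $C^{-1}$ (blocks indexed from $0$), $R^0_k=A_k$, $R^+_k=-B_k$, $R^-_k=-B_{k-1}'$. Two sequences share the same reciprocal model if these coefficients $R^0_k,R^-_k,R^+_k$, $k\in[1,N-1]$, coincide, i.e. their $C^{-1}$ have the same blocks $A_1,\ldots,A_{N-1}$ and $B_0,\ldots,B_{N-1}$. *)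

From HB Require Import structures.
From mathcomp Require Import all_boot all_order all_algebra.
Unset Printing Implicit Defensive.
Import Order.TTheory GRing.Theory Num.Theory.
Local Open Scope ring_scope.

(* State x_k in R^d, time indices k in [0,N] represented by 'I_N.+1.
   The stacked vector x = [x_0',...,x_N']' lives in R^((N+1)d); block
   matrices of that size are built with mxblock, all blocks being d x d. *)
Definition bdim (d N : nat) : 'I_N.+1 -> nat := fun _ => d.
Arguments bdim : clear implicits.

Notation bmx R d N := 'M[R]_(\sum_(i < N.+1) bdim d N i).

(* A forward Markov model is given by
     Mtr  k = M_{k,k-1}   (used for k in [1,N])
     Mcov k = M_k = Cov(e^M_k)   (used for k in [0,N]).
   Stacking: x = F x + e, i.e. (I - F) x = e, where F has the blocks
   M_{k,k-1} on its block subdiagonal. *)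
Definition IminusF {R : pzRingType} (d N : nat) (Mtr : nat -> 'M[R]_d)
  : bmx R d N :=
  mxblock (fun i j : 'I_N.+1 =>
    (if i == j then 1%:M else 0) - (if val i == (val j).+1 then Mtr (val i) else 0)
    : 'M[R]_(bdim d N i, bdim d N j)).

(* Cov(e) = blockdiag(M_0, ..., M_N) (white noise). *)
Definition covE {R : pzRingType} (d N : nat) (Mcov : nat -> 'M[R]_d)
  : bmx R d N :=
  mxblock (fun i j : 'I_N.+1 =>
    (if i == j then Mcov (val i) else 0) : 'M[R]_(bdim d N i, bdim d N j)).

Definition covx {R : comUnitRingType} (d N : nat) (Mtr Mcov : nat -> 'M[R]_d)
  : bmx R d N :=
  invmx (IminusF d N Mtr) *m covE d N Mcov *m (invmx (IminusF d N Mtr))^T.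

Definition precblock {R : comUnitRingType} (d N : nat) (Mtr Mcov : nat -> 'M[R]_d)
  (k l : nat) : 'M[R]_d :=
  submxblock (invmx (covx d N Mtr Mcov)) (inord k : 'I_N.+1) (inord l : 'I_N.+1).

Definition Ablk {R : comUnitRingType} d N (Mtr Mcov : nat -> 'M[R]_d) (k : nat) :=
  precblock d N Mtr Mcov k k.
Definition Bblk {R : comUnitRingType} d N (Mtr Mcov : nat -> 'M[R]_d) (k : nat) :=
  precblock d N Mtr Mcov k k.+1.

(* Two sequences share the same reciprocal model: the coefficients
   R^0_k = A_k, R^+_k = -B_k, R^-_k = -B_{k-1}' (k in [1,N-1]) coincide,
   i.e. (as stated in the paper's context) the blocks A_1..A_{N-1} and
   B_0..B_{N-1} of C^{-1} coincide. *)
Definition same_reciprocal_model {R : comUnitRingType} d N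
  (Mtr1 Mcov1 Mtr2 Mcov2 : nat -> 'M[R]_d) : Prop :=
  (forall k, (1 <= k < N)%N -> Ablk d N Mtr1 Mcov1 k = Ablk d N Mtr2 Mcov2 k) /\
  (forall k, (k < N)%N -> Bblk d N Mtr1 Mcov1 k = Bblk d N Mtr2 Mcov2 k).

Definition posdef {R : numDomainType} {d : nat} (A : 'M[R]_d) : Prop :=
  A^T = A /\ forall v : 'rV[R]_d, v != 0 -> 0 < (v *m A *m v^T) 0 0.

(* Writing the forward model as (I - F) x = e, with F carrying the blocks
   M_{k,k-1} on its block subdiagonal and Cov(e) = D = diag(M_0, ..., M_N), gives
   C^{-1} = (I - F)' D^{-1} (I - F).  Column k of I - F has only the blocks I
   (row k) and -M_{k+1,k} (row k+1), so for k < N the (k,k) block of C^{-1} is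
   M_k^{-1} + M_{k+1,k}' M_{k+1}^{-1} M_{k+1,k} and the (k,k+1) block is
   -M_{k+1,k}' M_{k+1}^{-1}.  The reciprocal coefficients are exactly these
   blocks, whence the equivalence. *)

From HB Require Import structures.
From mathcomp Require Import all_boot all_order all_algebra.
Import Order.TTheory GRing.Theory Num.Theory.
Local Open Scope ring_scope.

Section InverseMatrix.
Variables (R : comUnitRingType) (n : nat).
Implicit Types A B : 'M[R]_n.

Lemma mulmx1_invmx A B : A *m B = 1%:M -> invmx A = B.
Proof.
move=> AB1; have [uA _] := mulmx1_unit AB1.
by rewrite -[RHS]mul1mx -(mulVmx uA) -mulmxA AB1 mulmx1.
Qed.

Lemma invmxM A B : A \in unitmx -> B \in unitmx ->
  invmx (A *m B) = invmx B *m invmx A.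
Proof.
move=> uA uB; apply: mulmx1_invmx.
by rewrite mulmxA -(mulmxA A) mulmxV // mulmx1 mulmxV.
Qed.

End InverseMatrix.

Lemma mul_mxdiag (R : pzSemiRingType) p (p_ : 'I_p -> nat)
    (A_ B_ : forall i, 'M[R]_(p_ i)) :
  \mxdiag_i A_ i *m \mxdiag_i B_ i = \mxdiag_i (A_ i *m B_ i).
Proof.
rewrite {2}/mxdiag mul_mxdiag_mxblock; apply: eq_mxblock => i j.
by case: eqVneq => [<-|_]; rewrite ?conform_mx_id ?mulmx0.
Qed.

Section InverseBlockDiagonal.
Variables (R : comUnitRingType) (p : nat) (p_ : 'I_p -> nat).
Variable B_ : forall i, 'M[R]_(p_ i).
Hypothesis B_unit : forall i, B_ i \in unitmx.

Lemma mul_mxdiagV : \mxdiag_i B_ i *m \mxdiag_i invmx (B_ i) = 1%:M.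
Proof. by rewrite mul_mxdiag -(mxdiagZ 1); apply: eq_mxdiag => i; rewrite mulmxV. Qed.

Lemma unitmx_mxdiag : \mxdiag_i B_ i \in unitmx.
Proof. by have [] := mulmx1_unit mul_mxdiagV. Qed.

Lemma invmx_mxdiag : invmx (\mxdiag_i B_ i) = \mxdiag_i invmx (B_ i).
Proof. exact: mulmx1_invmx mul_mxdiagV. Qed.

End InverseBlockDiagonal.

Lemma posdef_unit (R : numFieldType) d (A : 'M[R]_d) : posdef A -> A \in unitmx.
Proof.
move=> [_ Apos]; rewrite unitmxE unitfE; apply/det0P => -[v v0 vA].
by have := Apos v v0; rewrite vA mul0mx mxE ltxx.
Qed.

Section ForwardModel.
Variables (R : comUnitRingType) (d N : nat) (Mtr Mcov : nat -> 'M[R]_d).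

Definition IminusF_block (m i : 'I_N.+1) : 'M[R]_d :=
  (if m == i then 1%:M else 0) - (if val m == (val i).+1 then Mtr (val m) else 0).

Lemma IminusF_mxblock : IminusF d N Mtr = \mxblock_(m, i) IminusF_block m i.
Proof. by []. Qed.

Lemma IminusF_block_diag i : IminusF_block i i = 1%:M.
Proof. by rewrite /IminusF_block eqxx (ltn_eqF (ltnSn _)) subr0. Qed.

Lemma IminusF_block_sub m i : val m = (val i).+1 -> IminusF_block m i = - Mtr (val m).
Proof.
move=> mi; have /negbTE m_neq_i : m != i.
  by rewrite -val_eqE mi (gtn_eqF (ltnSn _)).
by rewrite /IminusF_block m_neq_i mi eqxx sub0r.
Qed.

Lemma IminusF_block_out m i : m != i -> val m != (val i).+1 -> IminusF_block m i = 0.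
Proof. by move=> /negbTE mi /negbTE mi1; rewrite /IminusF_block mi mi1 subr0. Qed.

Lemma IminusF_unit : IminusF d N Mtr \in unitmx.
Proof.
have trig : is_trig_mx (IminusF d N Mtr).
  rewrite IminusF_mxblock.
  apply/is_trig_mxblockP; split => [m i lt_mi|i]; last first.
    by rewrite IminusF_block_diag scalar_mx_is_trig.
  by apply: IminusF_block_out; rewrite -?val_eqE ltn_eqF // ltnW.
rewrite unitmxE (det_trig trig) big1 ?unitr1 // => s _.
by rewrite IminusF_mxblock mxE IminusF_block_diag mxE eqxx.
Qed.

Lemma covE_mxdiag :
  covE d N Mcov = \mxdiag_(i < N.+1) (Mcov (val i) : 'M_(bdim d N i)).
Proof.
rewrite /covE /mxdiag; apply: eq_mxblock => i j.
by case: eqVneq => [<-|]; rewrite ?conform_mx_id.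
Qed.

Hypothesis Mcov_unit : forall k, (k <= N)%N -> Mcov k \in unitmx.

Let Mcov_unit_ord (i : 'I_N.+1) : Mcov (val i) \in unitmx.
Proof. exact: Mcov_unit (ltn_ord i). Qed.

Lemma invmx_covx : invmx (covx d N Mtr Mcov) =
  (IminusF d N Mtr)^T *m \mxdiag_(i < N.+1) invmx (Mcov (val i) : 'M_(bdim d N i))
    *m IminusF d N Mtr.
Proof.
have uL := IminusF_unit; have uE : covE d N Mcov \in unitmx.
  by rewrite covE_mxdiag unitmx_mxdiag.
rewrite /covx !invmxM ?unitmx_mul ?unitmx_tr ?unitmx_inv ?uL ?uE //.
by rewrite -trmx_inv !invmxK covE_mxdiag invmx_mxdiag ?mulmxA.
Qed.

Lemma precblock_sum (i l : 'I_N.+1) :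
  submxblock (invmx (covx d N Mtr Mcov)) i l =
  \sum_m (IminusF_block m i)^T *m invmx (Mcov (val m)) *m IminusF_block m l.
Proof.
rewrite invmx_covx IminusF_mxblock tr_mxblock mul_mxblock_mxdiag.
by rewrite mul_mxblock mxblockK.
Qed.

Section Column.
Variables (k : nat) (kN : (k < N)%N).
Let a : 'I_N.+1 := inord k.
Let b : 'I_N.+1 := inord k.+1.
Let val_a : val a = k. Proof. by rewrite /a /= inordK // ltnS ltnW. Qed.
Let val_b : val b = k.+1. Proof. by rewrite /b /= inordK. Qed.
Let a_neq_b : a != b. Proof. by rewrite -val_eqE val_a val_b ltn_eqF. Qed.

Let IminusF_col_out m : m != a -> m != b -> IminusF_block m a = 0.
Proof.
by move=> ma mb; apply: IminusF_block_out ma _; rewrite val_a -val_b val_eqE.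
Qed.

Let IminusF_block_ba : IminusF_block b a = - Mtr k.+1.
Proof. by rewrite IminusF_block_sub val_b // val_a. Qed.

Lemma Ablk_forward :
  Ablk d N Mtr Mcov k = invmx (Mcov k) + (Mtr k.+1)^T *m invmx (Mcov k.+1) *m Mtr k.+1.
Proof.
rewrite /Ablk /precblock -/a precblock_sum (bigD1 a) // (bigD1 b) 1?eq_sym //=.
rewrite big1 => [|m /andP[ma mb]]; last by rewrite IminusF_col_out // trmx0 !mul0mx.
rewrite addr0 IminusF_block_diag IminusF_block_ba trmx1 mul1mx mulmx1.
by rewrite [(- _)^T]linearN !mulNmx mulmxN opprK val_a val_b.
Qed.

Lemma Bblk_forward : Bblk d N Mtr Mcov k = - ((Mtr k.+1)^T *m invmx (Mcov k.+1)).
Proof.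
rewrite /Bblk /precblock -/a -/b precblock_sum (bigD1 b) //=.
rewrite big1 => [|m mb]; last first.
  have [->|ma] := eqVneq m a; last by rewrite IminusF_col_out // trmx0 !mul0mx.
  by rewrite (@IminusF_block_out a b a_neq_b) ?mulmx0 // val_a val_b ltn_eqF // leqW.
by rewrite addr0 IminusF_block_diag IminusF_block_ba mulmx1 linearN mulNmx val_b.
Qed.

End Column.
End ForwardModel.

Theorem proposition4 (R : realFieldType) (d N : nat)
  (Mtr1 Mcov1 Mtr2 Mcov2 : nat -> 'M[R]_d) :
  (forall k, (k <= N)%N -> posdef (Mcov1 k)) ->
  (forall k, (k <= N)%N -> posdef (Mcov2 k)) ->
  same_reciprocal_model d N Mtr1 Mcov1 Mtr2 Mcov2 <->
  ((forall k, (1 <= k < N)%N ->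
      invmx (Mcov1 k) + (Mtr1 k.+1)^T *m invmx (Mcov1 k.+1) *m Mtr1 k.+1
      = invmx (Mcov2 k) + (Mtr2 k.+1)^T *m invmx (Mcov2 k.+1) *m Mtr2 k.+1) /\
   (forall k, (k < N)%N ->
      (Mtr1 k.+1)^T *m invmx (Mcov1 k.+1) = (Mtr2 k.+1)^T *m invmx (Mcov2 k.+1))).
Proof.
move=> pd1 pd2.
have u1 k : (k <= N)%N -> Mcov1 k \in unitmx by move/pd1/posdef_unit.
have u2 k : (k <= N)%N -> Mcov2 k \in unitmx by move/pd2/posdef_unit.
split=> -[sameA sameB]; split=> k hk.
- have kN : (k < N)%N by case/andP: hk.
  by have := sameA k hk; rewrite !Ablk_forward.
- by have := sameB k hk; rewrite !Bblk_forward // => /oppr_inj.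
- have kN : (k < N)%N by case/andP: hk.
  by rewrite !Ablk_forward // sameA.
- by rewrite !Bblk_forward // sameB.
Qed.
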